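(* Let $P,Q,R$ be unary predicate symbols and $S$ a $0$-ary predicate symbol, and let $$\Gamma = \forall x\, \exists y\, (Py \wedge (Qy \rightarrow Rx)) \wedge \neg \forall x\, Rx, \qquad \Delta = \forall x\, (Px \rightarrow (Qx \vee S)) \rightarrow S.$$ Then the second-order implication $\exists R\,\Gamma\rightarrow\forall S\,\Delta$ is valid in all G-models (for the interpretation of $P,Q$ given by the model): at every state of every G-model it is forced.
   Context: $\neg A$ abbreviates $A\rightarrow\perp$. A G-model is $\mathcal{M}=\langle W,\le,v_0,D,\phi\rangle$: $W$ a nonempty set of states, $\le$ a reflexive transitive relation on $W$, $v_0\in W$ with $v_0\le v$ for all $v\in W$, $D$ a nonempty domain, and for each $k$-ary predicate symbol $P$ a set $\phi(P)\subseteq W\times D^k$ that is monotone: if $v\le w$ and $\langle v,a_1,\dots,a_k\rangle\in\phi(P)$ then $\langle w,a_1,\dots,a_k\rangle\in\phi(P)$. Forcing between states and sentences with constants $\mathbf a$ for elements $a\in D$: $v\Vdash P\mathbf a_1\dots\mathbf a_k$ iff $\langle v,a_1,\dots,a_k\rangle\in\phi(P)$; $\wedge,\vee$ are evaluated pointwise; $v\Vdash A\rightarrow B$ iff for all $w\ge v$, $w\Vdash A$ implies $w\Vdash B$; $\perp$ is never forced; $v\Vdash\exists x A$ iff $v\Vdash A[\mathbf a/x]$ for some $a\in D$; $v\Vdash\forall xA$ iff $v\Vdash A[\mathbf a/x]$ for all $a\in D$. Second-order quantifiers over a $k$-ary predicate variable range over monotone subsets of $W\times D^k$ (for $k=0$: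 upward-closed subsets of $W$): $v\Vdash\exists R\,A$ iff there is a monotone $R'\subseteq W\times D$ such that $v\Vdash A$ in the model obtained by interpreting $R$ as $R'$; $v\Vdash\forall S\,A$ iff for every upward-closed $S'\subseteq W$, $v\Vdash A$ in the model obtained by interpreting $S$ as $S'$. Implication between such formulas is forced as in the first-order clause. *)

(* plain Rocq. Shallow embedding of G-model forcing:
   a formula is interpreted as the set of states forcing it. *)

Record GModel := {
  W : Type;
  le : W -> W -> Prop;
  le_refl : forall v, le v v;
  le_trans : forall u v w, le u v -> le v w -> le u w;
  v0 : W;
  v0_least : forall v, le v0 v;
  D : Type;
  D_nonempty : inhabited D;
  phiP : W -> D -> Prop;
  phiQ : W -> D -> Prop;
  phiP_mono : forall v w a, le v w -> phiP v a -> phiP w a;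
  phiQ_mono : forall v w a, le v w -> phiQ v a -> phiQ w a
}.

Section Forcing.
Variable M : GModel.

Definition mono1 (R : W M -> D M -> Prop) : Prop :=
  forall v w a, le M v w -> R v a -> R w a.
Definition mono0 (S : W M -> Prop) : Prop :=
  forall v w, le M v w -> S v -> S w.

Definition fand (A B : W M -> Prop) : W M -> Prop := fun v => A v /\ B v.
Definition f_or (A B : W M -> Prop) : W M -> Prop := fun v => A v \/ B v.
Definition fimp (A B : W M -> Prop) : W M -> Prop :=
  fun v => forall w, le M v w -> A w -> B w.
Definition fbot : W M -> Prop := fun _ => False.
Definition fneg (A : W M -> Prop) : W M -> Prop := fimp A fbot.
Definition fex (A : D M -> W M -> Prop) : W M -> Prop := fun v => exists a, A a v.
Definition fall (A : D M -> W M -> Prop) : W M -> Prop := fun v => forall a, A a v.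
Definition atom1 (X : W M -> D M -> Prop) (a : D M) : W M -> Prop := fun v => X v a.
Definition atom0 (S : W M -> Prop) : W M -> Prop := S.

Definition fex2_1 (A : (W M -> D M -> Prop) -> W M -> Prop) : W M -> Prop :=
  fun v => exists R, mono1 R /\ A R v.
Definition fall2_0 (A : (W M -> Prop) -> W M -> Prop) : W M -> Prop :=
  fun v => forall S, mono0 S -> A S v.

Definition Gamma (R : W M -> D M -> Prop) : W M -> Prop :=
  fand (fall (fun x => fex (fun y =>
          fand (atom1 (phiP M) y) (fimp (atom1 (phiQ M) y) (atom1 R x)))))
       (fneg (fall (fun x => atom1 R x))).

Definition Delta (S : W M -> Prop) : W M -> Prop :=
  fimp (fall (fun x => fimp (atom1 (phiP M) x) (f_or (atom1 (phiQ M) x) (atom0 S))))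
       (atom0 S).

End Forcing.

From Stdlib Require Import Classical.

(* Assume Gamma at w and, at some w1 >= w, the antecedent of Delta.  For each
   x, Gamma gives a y with P y and Q y -> R x; the antecedent turns P y into
   Q y \/ S, so R x \/ S holds at w1 for every x.  Since the domain is
   constant, classically (forall x, R x) \/ S at w1, and the first disjunct is
   refuted by the conjunct ~ forall x R x of Gamma. *)

Lemma forall_or_const {A : Type} (P : A -> Prop) (Q : Prop) :
  (forall x, P x \/ Q) -> (forall x, P x) \/ Q.
Proof.
  intros HPQ. destruct (classic Q) as [HQ | HnQ].
  - right. exact HQ.
  - left. intros x. destruct (HPQ x) as [HP | HQ]; [exact HP | contradiction].
Qed.

Section Corollary.
Variable M : GModel.

Lemma fimp_mono (A B : W M -> Prop) (v w : W M) :
  le M v w -> fimp M A B v -> fimp M A B w.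
Proof.
  intros Hvw HAB u Hwu. apply HAB. exact (le_trans M v w u Hvw Hwu).
Qed.

Lemma Gamma_Delta_antecedent_or (R : W M -> D M -> Prop) (S : W M -> Prop)
    (w w1 : W M) :
  le M w w1 -> Gamma M R w ->
  fall M (fun x => fimp M (atom1 M (phiP M) x)
                          (f_or M (atom1 M (phiQ M) x) (atom0 M S))) w1 ->
  forall x, R w1 x \/ S w1.
Proof.
  intros Hww1 [HG _] Hant x.
  destruct (HG x) as [y [HPy HQR]].
  assert (HPy1 : phiP M w1 y) by exact (phiP_mono M w w1 y Hww1 HPy).
  destruct (Hant y w1 (le_refl M w1) HPy1) as [HQy | HS].
  - left. exact (fimp_mono _ _ w w1 Hww1 HQR w1 (le_refl M w1) HQy).
  - right. exact HS.
Qed.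

End Corollary.

Theorem corollary3p1 :
  forall (M : GModel) (v : W M),
    fimp M (fex2_1 M (Gamma M)) (fall2_0 M (Delta M)) v.
Proof.
  intros M v w _ [R [_ HGamma]] S _ w1 Hww1 Hant.
  destruct (forall_or_const _ _ (Gamma_Delta_antecedent_or M R S w w1 Hww1 HGamma Hant))
    as [HRall | HS].
  - exfalso. destruct HGamma as [_ HnotRall].
    exact (HnotRall w1 Hww1 HRall).
  - exact HS.
Qed.
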